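(* For all integers $n\ge0$, $$f(n,s,q)=\sum_{j=0}^n(-1)^j\begin{bmatrix} n\\ j\end{bmatrix}_q\frac{\prod_{i=0}^{j-1}(q^{2i+1}-s)}{(-q;q)_j},$$ $$F(2n,s,q)=\sum_{k=0}^n\begin{bmatrix} n\\ k\end{bmatrix}_{q^2}\frac{\prod_{j=0}^{2k-1}(q^j-s)}{(q;q^2)_k},\qquad F(2n+1,s,q)=\sum_{k=0}^n\begin{bmatrix} n\\ k\end{bmatrix}_{q^2}\frac{\prod_{j=0}^{2k}(q^j-s)}{(q;q^2)_{k+1}}.$$
   Context: $q$ is an indeterminate. $(x;q)_n=\prod_{j=0}^{n-1}(1-q^jx)$. The Gaussian binomial coefficient is $\begin{bmatrix} n\\ j\end{bmatrix}_q=\frac{(q;q)_n}{(q;q)_j(q;q)_{n-j}}$ for $0\le j\le n$ and $0$ otherwise. The normalized Rogers–Szegö polynomials are $f(n,s,q)=\dfrac{\sum_{j=0}^n s^j\begin{bmatrix} n\\ j\end{bmatrix}_{q^2}}{(-q;q)_n}$ and $F(n,s,q)=\dfrac{\sum_{j=0}^n(-s)^j\begin{bmatrix} n\\ j\end{bmatrix}_{q}}{(q;q^2)_{\lfloor (n+1)/2\rfloor}}$. *)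

From HB Require Import structures.
From mathcomp Require Import all_boot all_order all_algebra fraction.
Set Implicit Arguments. Unset Strict Implicit. Unset Printing Implicit Defensive.
Import Order.TTheory GRing.Theory Num.Theory.
Local Open Scope ring_scope.

Definition qpoch (K : fieldType) (x q : K) (n : nat) : K :=
  \prod_(j < n) (1 - q ^+ j * x).

Definition gbin (K : fieldType) (q : K) (n j : nat) : K :=
  if (j <= n)%N then qpoch q q n / (qpoch q q j * qpoch q q (n - j)) else 0.

Definition fRS (K : fieldType) (n : nat) (s q : K) : K :=
  (\sum_(j < n.+1) s ^+ j * gbin (q ^+ 2) n j) / qpoch (- q) q n.

Definition FRS (K : fieldType) (n : nat) (s q : K) : K :=
  (\sum_(j < n.+1) (- s) ^+ j * gbin q n j) / qpoch q (q ^+ 2) (n.+1)./2.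

(* The field Q(q, s) of rational functions in two indeterminates:
   fraction field of {poly {poly rat}}; s is the outer variable, q the inner. *)
Definition RQS := {fraction {poly {poly rat}}}.
Definition qv : RQS := FracField.tofrac ((('X : {poly rat}) %:P) : {poly {poly rat}}).
Definition sv : RQS := FracField.tofrac ('X : {poly {poly rat}}).

From HB Require Import structures.
From mathcomp Require Import all_boot all_order all_algebra fraction.
From mathcomp Require Import ring zify.
Set Implicit Arguments.
Unset Strict Implicit.
Unset Printing Implicit Defensive.
Import GRing.Theory.
Local Open Scope ring_scope.

(* Each side of each identity, read as a family P_N(s), satisfies the functional recurrence
   P_(N+1)(s) = P_N(t s) + lam s P_N(s) with P_0 = 1, where (t, lam) = (q^2, 1) for f and
   (q, -1) for F.  For the Rogers-Szego sums this is q-Pascal; for expansions in the bases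
   prod_(i<m) (q^(2i+1) - s) and prod_(j<m) (q^j - s) it follows from a three-term relation
   of the basis under s |-> t s, which turns into a recurrence for the coefficients.  For F
   the coefficients vanish unless N - m is even, which separates F(2n) from F(2n+1). *)

Lemma sum_even_terms (V : nmodType) (F : nat -> V) n :
  (forall m, odd m -> F m = 0) ->
  \sum_(m < (2 * n).+1) F m = \sum_(k < n.+1) F (2 * k)%N.
Proof.
move=> F_odd; elim: n => [|n IH]; first by rewrite !big_ord1.
rewrite mulnS [RHS]big_ord_recr /= -IH.
rewrite (big_ord_recr (2 + 2 * n)) (big_ord_recr (2 * n).+1) /=.
by rewrite F_odd ?addr0 ?mulnS //= oddM.
Qed.

Section ShiftRecurrence.
Variables (K : fieldType) (t lam : K).

Definition shift_rec (X : nat -> K -> K) :=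
  forall N s, X N.+1 s = X N (t * s) + lam * s * X N s.

Lemma shift_rec_eq (X Y : nat -> K -> K) : shift_rec X -> shift_rec Y ->
  (forall s, X 0%N s = Y 0%N s) -> forall N s, X N s = Y N s.
Proof. by move=> recX recY XY0; elim=> // N IH s; rewrite recX recY !IH. Qed.

Definition expansion (B : nat -> K -> K) (a : nat -> nat -> K) N s :=
  \sum_(m < N.+1) a N m * B m s.

Definition three_term (B : nat -> K -> K) (u v w : nat -> K) :=
  forall m s, B m (t * s) + lam * s * B m s =
    (if m is m'.+1 then u m * B m' s else 0) + v m * B m s + w m * B m.+1 s.

Definition coef_shift (u v w a : nat -> K) k :=
  a k.+1 * u k.+1 + a k * v k + (if k is k'.+1 then a k' * w k' else 0).

Lemma monomial_three_term :
  three_term (fun m s => s ^+ m) (fun _ => 0) (fun m => t ^+ m) (fun _ => lam).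
Proof. by move=> [|m] s; rewrite exprMn !exprS; ring. Qed.

Variables (B : nat -> K -> K) (u v w : nat -> K).
Hypothesis B_shift : three_term B u v w.

Lemma sum_coef_shift (a : nat -> K) N s : (forall m, (N < m)%N -> a m = 0) ->
  \sum_(k < N.+2) coef_shift u v w a k * B k s =
  \sum_(m < N.+1) a m * (B m (t * s) + lam * s * B m s).
Proof.
move=> a_eq0.
transitivity (\sum_(m < N.+2) a m * (B m (t * s) + lam * s * B m s)); last first.
  by rewrite big_ord_recr /= a_eq0 // mul0r addr0.
under [RHS]eq_bigr do rewrite B_shift !mulrDr.
under [LHS]eq_bigr do rewrite /coef_shift !mulrDl.
rewrite !big_split /=; congr (_ + _ + _).
- rewrite [LHS]big_ord_recr [RHS]big_ord_recl /= a_eq0 // !mul0r mulr0 addr0 add0r.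
  by apply: eq_bigr => i _; rewrite mulrA.
- by apply: eq_bigr => i _; rewrite mulrA.
- rewrite [LHS]big_ord_recl [RHS]big_ord_recr /= a_eq0 // !mul0r add0r addr0.
  by apply: eq_bigr => i _; rewrite mulrA.
Qed.

Lemma expansion_shift_rec (a : nat -> nat -> K) :
  (forall N m, (N < m)%N -> a N m = 0) ->
  (forall N k, a N.+1 k = coef_shift u v w (a N) k) ->
  shift_rec (expansion B a).
Proof.
move=> a_eq0 a_rec N s; rewrite /expansion; under eq_bigr do rewrite a_rec.
rewrite sum_coef_shift; last exact: a_eq0.
by rewrite big_distrr -big_split; apply: eq_bigr => m _; rewrite mulrDr mulrCA.
Qed.

End ShiftRecurrence.

Section GaussianBinomial.
Variable K : fieldType.

Lemma qpoch0 (a x : K) : qpoch a x 0 = 1.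
Proof. by rewrite /qpoch big_ord0. Qed.

Lemma qpochS (a x : K) n : qpoch a x n.+1 = qpoch a x n * (1 - x ^+ n * a).
Proof. by rewrite /qpoch big_ord_recr. Qed.

Lemma qpoch_neq0 (a x : K) n :
  (forall i, (i < n)%N -> 1 - x ^+ i * a != 0) -> qpoch a x n != 0.
Proof. by move=> nz; rewrite /qpoch prodf_seq_neq0; apply/allP => i _; apply: nz. Qed.

Variable x : K.
Hypothesis x_not_root1 : forall i, 1 - x ^+ i.+1 != 0.

Lemma qfacS n : qpoch x x n.+1 = qpoch x x n * (1 - x ^+ n.+1).
Proof. by rewrite qpochS exprSr. Qed.

Lemma qfac_neq0 n : qpoch x x n != 0.
Proof. by apply: qpoch_neq0 => i _; rewrite -exprSr x_not_root1. Qed.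

Lemma gbin_eq0 n k : (n < k)%N -> gbin x n k = 0.
Proof. by rewrite /gbin ltnNge => /negbTE ->. Qed.

Lemma gbinE n k : (k <= n)%N ->
  gbin x n k = qpoch x x n / (qpoch x x k * qpoch x x (n - k)).
Proof. by rewrite /gbin => ->. Qed.

Lemma gbin_addn k m :
  gbin x (k + m) k = qpoch x x (k + m) / (qpoch x x k * qpoch x x m).
Proof. by rewrite gbinE ?leq_addr // addKn. Qed.

Lemma gbinn0 n : gbin x n 0 = 1.
Proof. by rewrite -[n]add0n gbin_addn qpoch0 mul1r divff // qfac_neq0. Qed.

Lemma gbinnn n : gbin x n n = 1.
Proof. by rewrite -{1}[n]addn0 gbin_addn addn0 qpoch0 mulr1 divff // qfac_neq0. Qed.

Lemma gbinS n k : gbin x n.+1 k.+1 = gbin x n k + x ^+ k.+1 * gbin x n k.+1.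
Proof.
have [lt_kn|le_nk] := ltnP k n; last first.
  rewrite [gbin x n k.+1]gbin_eq0 ?mulr0 ?addr0 //.
  have [->|ne_nk] := eqVneq n k; first by rewrite !gbinnn.
  by rewrite !gbin_eq0 // ltn_neqAle ne_nk.
have [m ->] : exists m, n = (k + m.+1)%N by exists (n - k.+1)%N; lia.
rewrite (gbin_addn k m.+1) -addSn (gbin_addn k.+1 m.+1).
have -> : gbin x (k + m.+1) k.+1 = qpoch x x (k.+1 + m) / (qpoch x x k.+1 * qpoch x x m).
  by rewrite -gbin_addn addSnnS.
rewrite !addSn !addnS !qfacS.
have -> : (k + m).+2 = (k.+1 + m.+1)%N by rewrite addSn addnS.
by rewrite exprD; field; rewrite !qfac_neq0 !x_not_root1.
Qed.

Lemma gbin_ratio n k :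
  gbin x n k.+1 = gbin x n k * (1 - x ^+ (n - k)) / (1 - x ^+ k.+1).
Proof.
have [lt_kn|le_nk] := ltnP k n; last first.
  have -> : (n - k = 0)%N by apply/eqP; rewrite subn_eq0.
  by rewrite gbin_eq0 ?expr0 ?subrr ?mulr0 ?mul0r.
have [m ->] : exists m, n = (k.+1 + m)%N by exists (n - k.+1)%N; lia.
rewrite gbin_addn addSnnS gbin_addn addKn !qfacS.
by field; rewrite !qfac_neq0 !x_not_root1.
Qed.

Lemma gbin_monomial_shift_rec lam :
  shift_rec x lam (expansion (fun m s => s ^+ m) (fun N m => lam ^+ m * gbin x N m)).
Proof.
apply: (expansion_shift_rec (monomial_three_term x lam)).
  by move=> N m lt_Nm; rewrite gbin_eq0 ?mulr0.
move=> N [|k]; rewrite /coef_shift /=; first by rewrite !gbinn0; ring.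
by rewrite gbinS !exprS; ring.
Qed.

End GaussianBinomial.

Section RogersSzego.
Variables (K : fieldType) (q : K).
Hypothesis q_not_root1 : forall i, 1 - q ^+ i.+1 != 0.

Lemma sq_not_root1 i : 1 - (q ^+ 2) ^+ i.+1 != 0.
Proof. by rewrite -exprM mulnS q_not_root1. Qed.

Definition qfall m (s : K) := \prod_(j < m) (q ^+ j - s).
Definition qfall_odd m (s : K) := \prod_(i < m) (q ^+ (2 * i).+1 - s).
(* The q-analogue (1 - q)(1 - q^3)...(1 - q^(r-1)) of (r-1)!! for even r, and 0 for odd r. *)
Definition qdfact r := if odd r then 0 else qpoch q (q ^+ 2) r./2.

Lemma qfallS m s : qfall m.+1 s = qfall m s * (q ^+ m - s).
Proof. by rewrite /qfall big_ord_recr. Qed.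

Lemma qfallSq m s : qfall m.+1 (q * s) = (1 - q * s) * (q ^+ m * qfall m s).
Proof.
rewrite /qfall big_ord_recl; congr (_ * _).
rewrite (eq_bigr (fun i : 'I_m => q * (q ^+ i - s))) => [|i _]; last by rewrite exprS mulrBr.
by rewrite big_split prodr_const card_ord.
Qed.

Lemma qfall_oddS m s : qfall_odd m.+1 s = qfall_odd m s * (q ^+ (2 * m).+1 - s).
Proof. by rewrite /qfall_odd big_ord_recr. Qed.

Lemma qfall_oddSq m s :
  qfall_odd m.+1 (q ^+ 2 * s) = (q - q ^+ 2 * s) * (q ^+ (2 * m) * qfall_odd m s).
Proof.
rewrite /qfall_odd big_ord_recl; congr (_ * _).
rewrite (eq_bigr (fun i : 'I_m => q ^+ 2 * (q ^+ (2 * i).+1 - s))) => [|i _].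
  by rewrite big_split prodr_const card_ord exprM.
by rewrite lift0 mulnS -addnS exprD mulrBr.
Qed.

Lemma qfall_three_term :
  three_term q (-1) qfall (fun m => q ^+ m.-1 * (1 - q ^+ m)) (fun _ => 0) (fun _ => 1).
Proof.
move=> [|m] s; first by rewrite qfallS /qfall !big_ord0; ring.
by rewrite qfallSq !qfallS !exprS; ring.
Qed.

Lemma qfall_odd_three_term :
  three_term (q ^+ 2) 1 qfall_odd
    (fun j => q * (q ^+ 2) ^+ j.-1 * (1 - (q ^+ 2) ^+ j)) (fun j => (q ^+ 2) ^+ j * (1 + q))
    (fun _ => -1).
Proof.
move=> [|j] s; first by rewrite qfall_oddS /qfall_odd !big_ord0; ring.
by rewrite qfall_oddSq !qfall_oddS /= -!exprM !mulnS !exprS; ring.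
Qed.

Lemma qdfactS r : qdfact r.+1 = qdfact r.-1 * (1 - q ^+ r).
Proof.
case: r => [|r]; first by rewrite /qdfact /= subrr mulr0.
rewrite /qdfact /= negbK; case: ifP => [_|even_r]; first by rewrite mul0r.
rewrite qpochS -exprM -exprSr; congr (_ * (1 - q ^+ _.+1)).
by rewrite mul2n -[RHS]odd_double_half even_r.
Qed.

Lemma npochS r : qpoch (- q) q r.+1 =
  qpoch (- q) q r * (1 + q) - q * (1 - (q ^+ 2) ^+ r) * qpoch (- q) q r.-1.
Proof.
case: r => [|r]; first by rewrite !qpochS qpoch0; ring.
by rewrite /= !qpochS -exprM mulnC exprM !exprS; ring.
Qed.

Lemma qfall_coef_rec N k :
  gbin q N.+1 k * qdfact (N.+1 - k) =
  coef_shift (fun m => q ^+ m.-1 * (1 - q ^+ m)) (fun _ => 0) (fun _ => 1)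
    (fun m => gbin q N m * qdfact (N - m)) k.
Proof.
rewrite /coef_shift; case: k => [|k] /=.
  rewrite !(gbinn0 q_not_root1) subn0 (gbin_ratio q_not_root1) (gbinn0 q_not_root1).
  rewrite subn0 subn1 qdfactS.
  by field; exact: (q_not_root1 0).
rewrite (gbinS q_not_root1) subSS.
have [lt_kN|le_Nk] := ltnP k N; last first.
  by rewrite [gbin q N k.+1]gbin_eq0 ?[gbin q N k.+2]gbin_eq0 ?ltnS ?leqW //; ring.
rewrite (gbin_ratio q_not_root1 N k.+1) -(subnSK lt_kN) [(N - k.+2)%N]subnS qdfactS.
by field; rewrite q_not_root1.
Qed.

Lemma qfall_odd_coef_rec N k :
  (-1) ^+ k * gbin (q ^+ 2) N.+1 k * qpoch (- q) q (N.+1 - k) =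
  coef_shift (fun j => q * (q ^+ 2) ^+ j.-1 * (1 - (q ^+ 2) ^+ j))
    (fun j => (q ^+ 2) ^+ j * (1 + q)) (fun _ => -1)
    (fun m => (-1) ^+ m * gbin (q ^+ 2) N m * qpoch (- q) q (N - m)) k.
Proof.
rewrite /coef_shift; case: k => [|k] /=.
  rewrite !(gbinn0 sq_not_root1) subn0 (gbin_ratio sq_not_root1) (gbinn0 sq_not_root1).
  by rewrite subn0 subn1 npochS; field; exact: (sq_not_root1 0).
rewrite (gbinS sq_not_root1) subSS.
have [lt_kN|le_Nk] := ltnP k N; last first.
  rewrite [gbin _ N k.+1]gbin_eq0 ?[gbin _ N k.+2]gbin_eq0 ?ltnS ?leqW //.
  by rewrite !exprS; ring.
rewrite (gbin_ratio sq_not_root1 N k.+1) -(subnSK lt_kN) [(N - k.+2)%N]subnS npochS.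
set x := q ^+ 2; have := sq_not_root1 k.+1; rewrite -/x !exprS => nz.
by field.
Qed.

Lemma qfall_shift_rec :
  shift_rec q (-1) (expansion qfall (fun N m => gbin q N m * qdfact (N - m))).
Proof.
apply: (expansion_shift_rec qfall_three_term) => [N m lt_Nm|]; last exact: qfall_coef_rec.
by rewrite gbin_eq0 ?mul0r.
Qed.

Lemma qfall_odd_shift_rec :
  shift_rec (q ^+ 2) 1 (expansion qfall_odd
    (fun N m => (-1) ^+ m * gbin (q ^+ 2) N m * qpoch (- q) q (N - m))).
Proof.
apply: (expansion_shift_rec qfall_odd_three_term) => [N m lt_Nm|]; last first.
  exact: qfall_odd_coef_rec.
by rewrite gbin_eq0 ?mulr0 ?mul0r.
Qed.

Lemma qfall_expansion N s :
  \sum_(m < N.+1) (- s) ^+ m * gbin q N m =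
  \sum_(m < N.+1) gbin q N m * qdfact (N - m) * qfall m s.
Proof.
transitivity (expansion (fun m s => s ^+ m) (fun N m => (-1) ^+ m * gbin q N m) N s).
  by apply: eq_bigr => m _; rewrite exprNn mulrAC.
apply: (shift_rec_eq (gbin_monomial_shift_rec q_not_root1 (-1)) qfall_shift_rec) => s'.
by rewrite /expansion !big_ord1 (gbinn0 q_not_root1) /qfall /qdfact big_ord0 qpoch0.
Qed.

Lemma qfall_odd_expansion N s :
  \sum_(m < N.+1) s ^+ m * gbin (q ^+ 2) N m =
  \sum_(m < N.+1) (-1) ^+ m * gbin (q ^+ 2) N m * qpoch (- q) q (N - m) * qfall_odd m s.
Proof.
transitivity (expansion (fun m s => s ^+ m) (fun N m => 1 ^+ m * gbin (q ^+ 2) N m) N s).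
  by apply: eq_bigr => m _; rewrite expr1n mul1r mulrC.
apply: (shift_rec_eq (gbin_monomial_shift_rec sq_not_root1 1) qfall_odd_shift_rec) => s'.
rewrite /expansion !big_ord1 /= (gbinn0 sq_not_root1) subnn qpoch0.
by rewrite /qfall_odd big_ord0 !expr0 !mulr1.
Qed.

Lemma npoch_neq0 m : qpoch (- q) q m != 0.
Proof.
apply: qpoch_neq0 => i _; have := sq_not_root1 i.
have -> : 1 - (q ^+ 2) ^+ i.+1 = (1 - q ^+ i * q) * (1 - q ^+ i * - q).
  by rewrite exprAC [q ^+ i.+1]exprSr; ring.
by rewrite mulf_eq0 negb_or => /andP[].
Qed.

Lemma oddpoch_neq0 m : qpoch q (q ^+ 2) m != 0.
Proof. by apply: qpoch_neq0 => i _; rewrite -exprM -exprSr q_not_root1. Qed.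

Lemma qfac_sq m : qpoch (q ^+ 2) (q ^+ 2) m = qpoch q q m * qpoch (- q) q m.
Proof.
elim: m => [|m IH]; first by rewrite !qpoch0 mulr1.
by rewrite !qpochS IH -exprM mulnC exprM !exprS; ring.
Qed.

Lemma qfac_double m : qpoch q q (2 * m) = qpoch (q ^+ 2) (q ^+ 2) m * qpoch q (q ^+ 2) m.
Proof.
elim: m => [|m IH]; first by rewrite !qpoch0 mulr1.
by rewrite mulnS !qpochS IH -!exprM !exprS; ring.
Qed.

Lemma qfac_double_succ m :
  qpoch q q (2 * m).+1 = qpoch (q ^+ 2) (q ^+ 2) m * qpoch q (q ^+ 2) m.+1.
Proof. by rewrite qpochS qfac_double qpochS -exprM mulrA. Qed.

Lemma qdfact_double m : qdfact (2 * m) = qpoch q (q ^+ 2) m.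
Proof. by rewrite /qdfact oddM /= mul2n doubleK. Qed.

Lemma f_expansion n s : fRS n s q =
  \sum_(j < n.+1) (-1) ^+ j * gbin q n j * qfall_odd j s / qpoch (- q) q j.
Proof.
rewrite /fRS qfall_odd_expansion mulr_suml; apply: eq_bigr => [[j /= le_jn]] _.
rewrite !gbinE // !qfac_sq.
by field; rewrite !(qfac_neq0 q_not_root1) !npoch_neq0.
Qed.

Lemma F_even_expansion n s : FRS (2 * n) s q =
  \sum_(k < n.+1) gbin (q ^+ 2) n k * qfall (2 * k) s / qpoch q (q ^+ 2) k.
Proof.
rewrite /FRS qfall_expansion.
rewrite (sum_even_terms (F := fun m => gbin q (2 * n) m * qdfact (2 * n - m) * qfall m s));
  last first.
  move=> m odd_m; have [le_m2n|lt_2nm] := leqP m (2 * n); last by rewrite gbin_eq0 ?mul0r.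
  by rewrite /qdfact oddB // oddM odd_m /= mulr0 mul0r.
have -> : ((2 * n).+1./2 = n)%N by lia.
rewrite mulr_suml; apply: eq_bigr => [[k /= le_kn]] _.
rewrite -mulnBr qdfact_double !gbinE ?leq_mul2l // -mulnBr !qfac_double.
by field; rewrite !(qfac_neq0 sq_not_root1) !oddpoch_neq0.
Qed.

Lemma F_odd_expansion n s : FRS (2 * n).+1 s q =
  \sum_(k < n.+1) gbin (q ^+ 2) n k * qfall (2 * k).+1 s / qpoch q (q ^+ 2) k.+1.
Proof.
rewrite /FRS qfall_expansion big_ord_recl /= subn0.
have -> : qdfact (2 * n).+1 = 0 by rewrite /qdfact oddS oddM.
rewrite mulr0 mul0r add0r.
rewrite (sum_even_terms
  (F := fun m => gbin q (2 * n).+1 m.+1 * qdfact (2 * n - m) * qfall m.+1 s)); last first.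
  move=> m odd_m; have [le_m2n|lt_2nm] := leqP m (2 * n); last by rewrite gbin_eq0 ?mul0r.
  by rewrite /qdfact oddB // oddM odd_m /= mulr0 mul0r.
have -> : ((2 * n)./2 = n)%N by lia.
rewrite mulr_suml; apply: eq_bigr => [[k /= le_kn]] _.
rewrite -mulnBr qdfact_double !gbinE ?ltnS ?leq_mul2l // subSS -mulnBr.
rewrite !qfac_double_succ qfac_double.
by field; rewrite !(qfac_neq0 sq_not_root1) !oddpoch_neq0.
Qed.

End RogersSzego.

Lemma qv_not_root1 i : 1 - qv ^+ i.+1 != 0.
Proof.
have -> : 1 - qv ^+ i.+1 = tofrac (1 - (('X : {poly rat})%:P : {poly {poly rat}}) ^+ i.+1).
  by rewrite rmorphB rmorph1 rmorphXn.
rewrite -tofrac0 tofrac_eq -rmorphXn -polyC1 -rmorphB polyC_eq0 subr_eq0.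
by apply/eqP => E; move: (size_polyXn rat i.+1); rewrite -E size_poly1.
Qed.

Theorem theorem2p1 (n : nat) :
  [/\ fRS n sv qv =
        \sum_(j < n.+1) (-1) ^+ j * gbin qv n j *
           (\prod_(i < j) (qv ^+ (2 * i).+1 - sv)) / qpoch (- qv) qv j,
      FRS (2 * n) sv qv =
        \sum_(k < n.+1) gbin (qv ^+ 2) n k *
           (\prod_(j < 2 * k) (qv ^+ j - sv)) / qpoch qv (qv ^+ 2) k
    & FRS (2 * n).+1 sv qv =
        \sum_(k < n.+1) gbin (qv ^+ 2) n k *
           (\prod_(j < (2 * k).+1) (qv ^+ j - sv)) / qpoch qv (qv ^+ 2) k.+1].
Proof.
split.
- exact: f_expansion qv_not_root1 n sv.
- exact: F_even_expansion qv_not_root1 n sv.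
- exact: F_odd_expansion qv_not_root1 n sv.
Qed.
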